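(* Let $(S,\ast)$ be an adequate commutative partial semigroup. Then $J_\delta(S)$ is a closed two-sided ideal of $\delta S$.
   Context: A partial semigroup is a pair $(S,\ast)$ where $\ast$ is an operation defined on a subset of $S\times S$ such that for all $x,y,z\in S$, $(x\ast y)\ast z=x\ast(y\ast z)$ in the sense that if either side is defined, so is the other and they are equal; it is commutative if $x\ast y=y\ast x$ whenever defined. For $s\in S$, $\phi_S(s)=\{t\in S: s\ast t\text{ is defined}\}$; for $H\in\mathcal{P}_f(S)$ (finite nonempty subsets), $\sigma_S(H)=\bigcap_{s\in H}\phi_S(s)$. $(S,\ast)$ is adequate if $\sigma_S(H)\ne\emptyset$ for all $H\in\mathcal{P}_f(S)$. $\beta S$ is the Stone–Čech compactification of discrete $S$ (ultrafilters on $S$, with basic open sets $\overline{A}=\{p: A\in p\}$), and $\delta S=\bigcap_{x\in S}\overline{\phi_S(x)}\subseteq\beta S$. For $s\in S$ and $A\subseteq S$, $s^{-1}A=\{t\in\phi_S(s): s\ast t\in A\}$; for $p\in\beta S$, $q\in\delta S$, $p\ast q=\{A\subseteq S:\{s\in S: s^{-1}A\in q\}\in p\}$. With this operation $\delta S$ is a compact right topological semigroup. A sequence $\langle y_n\rangle$ in $S$ is adequate if $\prod_{n\in F}y_n$ is defined for every $F\in\mathcal{P}_f(\mathbb{N})$ and for every $K\in\mathcal{P}_f(S)$ there is $m$ with $\prod_{n\in F}y_n\in\sigma_S(K)$ for all $F\in\mathcal{P}_f(\mathbb{N})$ with $\min F\ge m$. $\mathcal{T}_S$ is the set of adequate sequences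 in $S$. For $W\in\mathcal{P}_f(S)$, $a\in S$, $W\ast a=\{w\ast a: w\in W,\ w\ast a\text{ defined}\}$. $A\subseteq S$ is a $J_\delta$-set if for every $F\in\mathcal{P}_f(\mathcal{T}_S)$ and $W\in\mathcal{P}_f(S)$ there exist $a\in\sigma_S(W)$ and $H\in\mathcal{P}_f(\mathbb{N})$ such that for each $f\in F$, $\prod_{t\in H}f(t)\in\sigma_S(W\ast a)$ and $a\ast\prod_{t\in H}f(t)\in A$. $J_\delta(S)=\{p\in\delta S: \text{every } A\in p \text{ is a } J_\delta\text{-set}\}$. *)

From Stdlib Require Import List Sorted Arith.
Import ListNotations.

Section PartialSemigroup.
Variable S : Type.
(* A partial operation: [op x y = None] means x * y is undefined. *)
Variable op : S -> S -> option S.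

(* (x*y)*z = x*(y*z): if either side is defined so is the other, and they agree *)
Definition ps_assoc : Prop :=
  forall x y z : S,
    match op x y with Some xy => op xy z | None => None end =
    match op y z with Some yz => op x yz | None => None end.

Definition ps_comm : Prop := forall x y : S, op x y = op y x.

Definition phiS (s : S) : S -> Prop := fun t => op s t <> None.

Definition sigmaS (H : list S) : S -> Prop := fun t => forall s, In s H -> phiS s t.

Definition ps_adequate : Prop :=
  forall H : list S, H <> [] -> exists t, sigmaS H t.

Fixpoint lprod (l : list S) : option S :=
  match l with
  | [] => None
  | [x] => Some x
  | x :: l' => match lprod l' with Some v => op x v | None => None end
  end.

(* A finite nonempty subset F of N is represented by a nonempty strictly
   increasing list; prod_{n in F} y_n is the product in increasing order. *)
Definition finset_nat (F : list nat) : Prop := F <> [] /\ Sorted lt F.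

Definition seqprod (y : nat -> S) (F : list nat) : option S := lprod (map y F).

Definition adequate_seq (y : nat -> S) : Prop :=
  (forall F, finset_nat F -> exists v, seqprod y F = Some v) /\
  (forall K : list S, K <> [] ->
     exists m, forall F, finset_nat F -> m <= hd 0 F ->
       forall v, seqprod y F = Some v -> sigmaS K v).

(* t in sigma_S(W * a), where W * a = { w*a | w in W, w*a defined } *)
Definition sigma_Wa (W : list S) (a : S) (t : S) : Prop :=
  forall w v, In w W -> op w a = Some v -> phiS v t.

Definition Jdelta_set (A : S -> Prop) : Prop :=
  forall F : list (nat -> S), F <> [] -> (forall f, In f F -> adequate_seq f) ->
  forall W : list S, W <> [] ->
  exists a, sigmaS W a /\
  exists H, finset_nat H /\
    forall f, In f F ->
      exists v, seqprod f H = Some v /\ sigma_Wa W a v /\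
      exists u, op a v = Some u /\ A u.

Definition ultrafilter (p : (S -> Prop) -> Prop) : Prop :=
  ~ p (fun _ => False) /\
  p (fun _ => True) /\
  (forall A B : S -> Prop, p A -> (forall x, A x -> B x) -> p B) /\
  (forall A B : S -> Prop, p A -> p B -> p (fun x => A x /\ B x)) /\
  (forall A : S -> Prop, p A \/ p (fun x => ~ A x)).

(* delta S = intersection over x of the closures of phi_S(x) *)
Definition deltaS (p : (S -> Prop) -> Prop) : Prop :=
  ultrafilter p /\ forall x, p (phiS x).

Definition sinv (s : S) (A : S -> Prop) : S -> Prop :=
  fun t => exists u, op s t = Some u /\ A u.

Definition uf_mul (p q : (S -> Prop) -> Prop) : (S -> Prop) -> Prop :=
  fun A => p (fun s => q (sinv s A)).

Definition Jdelta (p : (S -> Prop) -> Prop) : Prop :=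
  deltaS p /\ forall A, p A -> Jdelta_set A.

(* closed subset of beta S: contains every ultrafilter in its closure
   (p is in the closure iff every basic neighbourhood cl(A), A in p, meets it) *)
Definition uf_closed (J : ((S -> Prop) -> Prop) -> Prop) : Prop :=
  forall p, ultrafilter p -> (forall A, p A -> exists r, J r /\ r A) -> J p.

(* two-sided ideal of the semigroup delta S (Hindman--Strauss: nonempty) *)
Definition two_sided_ideal_delta (J : ((S -> Prop) -> Prop) -> Prop) : Prop :=
  (forall p, J p -> deltaS p) /\
  (exists p, J p) /\
  (forall p q, deltaS p -> J q -> J (uf_mul p q) /\ J (uf_mul q p)).

End PartialSemigroup.

From Stdlib Require Import List Sorted Arith Lia Permutation Mergesort.
From Stdlib Require Import Classical ClassicalEpsilon FunctionalExtensionality PropExtensionality.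
From mathcomp Require boolp classical_sets filter.
Import ListNotations.

(* Closedness is immediate: J_delta(S) is cut out of the closed set delta S by conditions on
   members.  For the ideal property, a witness for [A] in [p q] or [q p] is obtained by
   translating a J_delta-witness of a set in [q] by a single point chosen with [p].
   Nonemptiness is the central-sets argument.  Fix adequate sequences [f_1 .. f_l] and [W],
   and in the partial semigroup [S^l] let [I_m] be the tuples [(a * prod_{t in H} f_i(t))_i]
   of J_delta-witnesses with [min H >= m], and [E_m] the union of [I_m] with the constant
   tuples over sigma(W).  The ultrafilters containing every [E_m] form a closed subsemigroup
   [T] of delta(S^l), and those also containing every [I_m] an ideal of [T].  For a minimal
   idempotent [p] of delta S the diagonal image [e] of [p] is an idempotent of [T], so some
   idempotent [f] of the ideal lies below [e]; every coordinate projection of [f] is then an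
   idempotent below [p], hence equal to [p].  So for [A] in [p] some tuple of [I_0] has all
   its coordinates in [A]: a J_delta-witness for [A]. *)

Lemma zorn_preorder (T : Type) (t0 : T) (R : T -> T -> Prop) :
  (forall t, R t t) -> (forall r s t, R r s -> R s t -> R r t) ->
  (forall A : T -> Prop, (forall s t, A s -> A t -> R s t \/ R t s) ->
     exists t, forall s, A s -> R s t) ->
  exists t, forall s, R t s -> R s t.
Proof.
  intros Hrefl Htrans Hchain.
  set (Rb := fun x y => boolp.asbool (R x y)).
  assert (HRb : forall x y, Rb x y = true <-> R x y).
  { intros x y; unfold Rb; destruct (boolp.asboolP (R x y)); split; auto; discriminate. }
  destruct (@classical_sets.ZL_preorder T t0 Rb) as [t Hmax].
  - intros t; apply HRb, Hrefl.
  - intros r s u H1 H2; apply HRb; apply HRb in H1, H2; eauto.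
  - intros A HA. destruct (Hchain A) as [t Ht].
    + intros s u Hs Hu; destruct (HA s u Hs Hu); [left|right]; apply HRb; assumption.
    + exists t; intros s Hs; apply HRb; auto.
  - exists t; intros s Hs; apply HRb, Hmax, HRb, Hs.
Qed.

Lemma minimal_subset_exists (T : Type) (Good : (T -> Prop) -> Prop) (M0 : T -> Prop) :
  Good M0 ->
  (forall Ch : (T -> Prop) -> Prop, (forall M, Ch M -> Good M) ->
     (forall M1 M2, Ch M1 -> Ch M2 -> (forall x, M1 x -> M2 x) \/ (forall x, M2 x -> M1 x)) ->
     Good (fun x => M0 x /\ forall M, Ch M -> M x)) ->
  exists M, Good M /\ (forall x, M x -> M0 x) /\
    forall M', Good M' -> (forall x, M' x -> M x) -> forall x, M x -> M' x.
Proof.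
  intros HM0 Hchain.
  set (Sub := {M | Good M /\ forall x, M x -> M0 x}).
  destruct (zorn_preorder Sub (exist _ M0 (conj HM0 (fun x H => H)))
              (fun M1 M2 => forall x, proj1_sig M2 x -> proj1_sig M1 x))
    as [[M [HM HMM0]] Hmax]; [auto|eauto| |].
  - intros A HA.
    set (Ch := fun M => exists t, A t /\ M = proj1_sig t).
    assert (Hmeet : Good (fun x => M0 x /\ forall M, Ch M -> M x)).
    { apply Hchain.
      - intros M' [t [_ ->]]. exact (proj1 (proj2_sig t)).
      - intros M1 M2 [t1 [Ht1 ->]] [t2 [Ht2 ->]]. destruct (HA t1 t2 Ht1 Ht2); auto. }
    exists (exist _ (fun x => M0 x /\ forall M, Ch M -> M x)
              (conj Hmeet (fun x H => proj1 H)) : Sub).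
    intros t Ht x [_ Hx]. apply Hx. exists t; auto.
  - exists M. split; [|split]; auto. intros M' HM' HM'M.
    apply (Hmax (exist _ M' (conj HM' (fun x H => HMM0 x (HM'M x H))))). exact HM'M.
Qed.

(** * Ultrafilters *)

Section Ultrafilters.
Variable X : Type.

Definition is_filter (F : (X -> Prop) -> Prop) : Prop :=
  ~ F (fun _ => False) /\ F (fun _ => True) /\
  (forall A B : X -> Prop, F A -> (forall x, A x -> B x) -> F B) /\
  (forall A B : X -> Prop, F A -> F B -> F (fun x => A x /\ B x)).

Variable p : (X -> Prop) -> Prop.
Hypothesis Hp : ultrafilter X p.

Lemma ultrafilter_mono (A B : X -> Prop) : p A -> (forall x, A x -> B x) -> p B.
Proof. destruct Hp as (_ & _ & H & _). apply H. Qed.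

Lemma ultrafilter_and (A B : X -> Prop) : p A -> p B -> p (fun x => A x /\ B x).
Proof. destruct Hp as (_ & _ & _ & H & _). apply H. Qed.

Lemma ultrafilter_true : p (fun _ => True).
Proof. destruct Hp as (_ & H & _). exact H. Qed.

Lemma ultrafilter_dec (A : X -> Prop) : p A \/ p (fun x => ~ A x).
Proof. destruct Hp as (_ & _ & _ & _ & H). apply H. Qed.

Lemma ultrafilter_compl (A : X -> Prop) : ~ p A -> p (fun x => ~ A x).
Proof. destruct (ultrafilter_dec A); tauto. Qed.

Lemma ultrafilter_inhabited (A : X -> Prop) : p A -> exists x, A x.
Proof.
  intros HA. apply NNPP. intros Hempty. destruct Hp as (H0 & _).
  apply H0, (ultrafilter_mono A); auto. intros x Hx. apply Hempty. eauto.
Qed.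

Lemma ultrafilter_not_compl (A : X -> Prop) : p A -> ~ p (fun x => ~ A x).
Proof.
  intros HA HnA. destruct (ultrafilter_inhabited _ (ultrafilter_and _ _ HA HnA)) as [x [H1 H2]].
  auto.
Qed.

Lemma ultrafilter_iff (A B : X -> Prop) : (forall x, A x <-> B x) -> (p A <-> p B).
Proof. intros H. split; intros; eapply ultrafilter_mono; eauto; apply H. Qed.

Lemma ultrafilter_forall_in (T : Type) (L : list T) (R : T -> X -> Prop) :
  (forall f, In f L -> p (R f)) -> p (fun x => forall f, In f L -> R f x).
Proof.
  induction L as [|f L IH]; intros H.
  - apply (ultrafilter_mono _ _ ultrafilter_true). intros x _ f [].
  - apply (ultrafilter_mono (fun x => R f x /\ forall g, In g L -> R g x)).
    + apply ultrafilter_and; [apply H; left; auto|apply IH; intros; apply H; right; auto].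
    + intros x [H1 H2] g [<-|Hg]; auto.
Qed.

Lemma ultrafilter_forall_lt (n : nat) (R : nat -> X -> Prop) :
  (forall i, i < n -> p (R i)) -> p (fun x => forall i, i < n -> R i x).
Proof.
  intros H. apply (ultrafilter_mono (fun x => forall i, In i (seq 0 n) -> R i x)).
  - apply ultrafilter_forall_in. intros i Hi%in_seq. apply H; lia.
  - intros x Hx i Hi. apply Hx, in_seq. lia.
Qed.

End Ultrafilters.

Arguments ultrafilter_mono {X p} Hp A B.
Arguments ultrafilter_and {X p} Hp A B.
Arguments ultrafilter_true {X p} Hp.
Arguments ultrafilter_dec {X p} Hp A.
Arguments ultrafilter_compl {X p} Hp A.
Arguments ultrafilter_inhabited {X p} Hp A.
Arguments ultrafilter_not_compl {X p} Hp A.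
Arguments ultrafilter_iff {X p} Hp A B.
Arguments ultrafilter_forall_in {X p} Hp {T} L R.
Arguments ultrafilter_forall_lt {X p} Hp n R.

Section UltrafilterSpace.
Variable X : Type.
Local Notation ufilter := ((X -> Prop) -> Prop).

Lemma ultrafilter_ext (p q : ufilter) : ultrafilter X p -> ultrafilter X q ->
  (forall A, p A -> q A) -> p = q.
Proof.
  intros Hp Hq Hpq. apply functional_extensionality; intros A.
  apply propositional_extensionality. split; [apply Hpq|]. intros HqA.
  apply NNPP. intros HpA. apply (ultrafilter_not_compl Hq A HqA), Hpq, ultrafilter_compl; auto.
Qed.

Lemma filter_extends_to_ultrafilter (F : ufilter) :
  is_filter X F -> exists p, ultrafilter X p /\ forall A, F A -> p A.
Proof.
  intros (F0 & FT & FS & FI).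
  assert (HF : filter.ProperFilter F).
  { split; [exact F0|split; [exact FT|exact FI|]]. intros A B HAB HA. exact (FS A B HA HAB). }
  destruct (filter.ultraFilterLemma HF) as [p [Hp HFp]].
  pose proof (filter.ultra_proper (F:=p)) as Pp.
  exists p. split; [|exact HFp]. repeat split.
  - exact (filter.filter_not_empty p).
  - exact (@filter.filterT _ p _).
  - intros A B HA HAB. exact (@filter.filterS _ p _ A B HAB HA).
  - intros A B. exact (@filter.filterI _ p _ A B).
  - intros A. exact (filter.in_ultra_setVsetC A Hp).
Qed.

Lemma closure_mem (C : ufilter -> Prop) (p : ufilter) (A : X -> Prop) : ultrafilter X p ->
  (forall B, p B -> exists r, C r /\ r B) -> (forall r, C r -> ultrafilter X r /\ r A) -> p A.
Proof.
  intros Hp Hcl HC. apply NNPP. intros HnA.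
  destruct (Hcl _ (ultrafilter_compl Hp A HnA)) as [r [Cr HrnA]].
  destruct (HC r Cr) as [Hr HrA]. exact (ultrafilter_not_compl Hr A HrA HrnA).
Qed.

Lemma closed_setI_basic (C : ufilter -> Prop) (B : X -> Prop) :
  uf_closed X C -> (forall r, C r -> ultrafilter X r) -> uf_closed X (fun r => C r /\ r B).
Proof.
  intros HC HCu p Hp Hcl. split.
  - apply HC; auto. intros A HA. destruct (Hcl A HA) as [r [[Cr _] Hr]]. eauto.
  - apply (closure_mem (fun r => C r /\ r B)); auto. intros r [Cr Br]. auto.
Qed.

Lemma directed_closed_family_meet (CC : (ufilter -> Prop) -> Prop) :
  (exists C, CC C) ->
  (forall C, CC C -> uf_closed X C /\ (forall r, C r -> ultrafilter X r) /\ exists r, C r) ->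
  (forall C1 C2, CC C1 -> CC C2 -> exists C3, CC C3 /\ forall r, C3 r -> C1 r /\ C2 r) ->
  exists p, ultrafilter X p /\ forall C, CC C -> C p.
Proof.
  intros [C0 HC0] Hcl Hdir.
  assert (Hu : forall C r, CC C -> C r -> ultrafilter X r) by (intros C r HC; apply (Hcl C HC)).
  set (F := fun A => exists C, CC C /\ forall r, C r -> r A).
  assert (HF : is_filter X F).
  { split; [|split; [|split]].
    - intros [C [HC H]]. destruct (Hcl C HC) as (_ & _ & [r Hr]).
      destruct (ultrafilter_inhabited (Hu C r HC Hr) _ (H r Hr)) as [x []].
    - exists C0. split; [exact HC0|]. intros r Hr. exact (ultrafilter_true (Hu C0 r HC0 Hr)).
    - intros A B [C [HC H]] HAB. exists C. split; [exact HC|]. intros r Hr.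
      exact (ultrafilter_mono (Hu C r HC Hr) A B (H r Hr) HAB).
    - intros A B [C1 [HC1 H1]] [C2 [HC2 H2]]. destruct (Hdir C1 C2 HC1 HC2) as [C3 [HC3 H3]].
      exists C3. split; [exact HC3|]. intros r Hr. destruct (H3 r Hr).
      apply (ultrafilter_and (Hu C3 r HC3 Hr)); [apply H1|apply H2]; assumption. }
  destruct (filter_extends_to_ultrafilter F HF) as [p [Hp HFp]].
  exists p. split; auto. intros C HC. apply (proj1 (Hcl C HC)); auto.
  intros A HA. apply NNPP. intros Hno.
  apply (ultrafilter_not_compl Hp A HA), HFp. exists C. split; auto.
  intros r Hr. apply (ultrafilter_compl (Hu C r HC Hr)). intro. apply Hno. eauto.
Qed.

Lemma closed_chain_meet (M0 : ufilter -> Prop) (Ch : (ufilter -> Prop) -> Prop) :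
  uf_closed X M0 -> (forall r, M0 r -> ultrafilter X r) -> (exists r, M0 r) ->
  (forall M, Ch M -> uf_closed X M /\ (exists r, M r) /\ forall r, M r -> M0 r) ->
  (forall M1 M2, Ch M1 -> Ch M2 -> (forall r, M1 r -> M2 r) \/ (forall r, M2 r -> M1 r)) ->
  uf_closed X (fun r => M0 r /\ forall M, Ch M -> M r) /\
  exists r, M0 r /\ forall M, Ch M -> M r.
Proof.
  intros HC0 Hu0 Hne0 HCh Htot. split.
  - intros p Hp Hcl. split.
    + apply HC0; auto. intros A HA. destruct (Hcl A HA) as [q [[H0 _] Hq]]. eauto.
    + intros M HM. apply (proj1 (HCh M HM)); auto.
      intros A HA. destruct (Hcl A HA) as [q [[_ H1] Hq]]. exists q. split; [apply H1, HM|exact Hq].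
  - set (CC := fun D => D = M0 \/ Ch D).
    assert (HCC : forall D, CC D -> forall r, D r -> M0 r).
    { intros D [->|HD] r Hr; auto. apply (HCh D HD); auto. }
    destruct (directed_closed_family_meet CC) as [p [_ Hall]].
    + exists M0. left; auto.
    + intros D HD. split; [|split].
      * destruct HD as [->|HD]; [auto|apply (HCh D HD)].
      * intros r Hr. apply Hu0, (HCC D HD r Hr).
      * destruct HD as [->|HD]; [auto|apply (HCh D HD)].
    + intros D1 D2 HD1 HD2.
      destruct HD1 as [E1|HD1].
      { subst D1. exists D2. split; [exact HD2|].
        intros r Hr. split; [exact (HCC D2 HD2 r Hr)|exact Hr]. }
      destruct HD2 as [E2|HD2].
      { subst D2. exists D1. split; [right; exact HD1|]. intros r Hr.
        split; [exact Hr|exact (HCC D1 (or_intror HD1) r Hr)]. }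
      destruct (Htot D1 D2 HD1 HD2) as [H|H]; [exists D1|exists D2]; split; try right; auto.
    + exists p. split; [apply Hall; left; auto|]. intros M HM. apply Hall. right; auto.
Qed.

End UltrafilterSpace.

(** * The semigroup delta S *)

Section DeltaSemigroup.
Variable X : Type.
Variable opX : X -> X -> option X.
Hypothesis assoc : ps_assoc X opX.

Local Notation ufilter := ((X -> Prop) -> Prop).
Local Notation phi := (phiS X opX).
Local Notation delta := (deltaS X opX).
Local Notation mul := (uf_mul X opX).

Definition oprod (a b : option X) : option X :=
  match a, b with Some x, Some y => opX x y | _, _ => None end.

Lemma oprod_assoc a b c : oprod (oprod a b) c = oprod a (oprod b c).
Proof.
  destruct a as [x|], b as [y|], c as [z|]; simpl; auto;
    try (destruct (opX x y); auto; fail); try (destruct (opX y z); auto; fail).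
  exact (assoc x y z).
Qed.

Lemma delta_ultrafilter p : delta p -> ultrafilter X p.
Proof. intros [H _]; exact H. Qed.

Lemma delta_phi p x : delta p -> p (phi x).
Proof. intros [_ H]; exact (H x). Qed.

Lemma delta_sigma p Z : delta p -> p (sigmaS X opX Z).
Proof.
  intros Hp.
  apply (ultrafilter_mono (delta_ultrafilter p Hp) (fun t => forall s, In s Z -> phi s t)).
  - apply (ultrafilter_forall_in (delta_ultrafilter p Hp)). intros s _. apply delta_phi, Hp.
  - intros t Ht. exact Ht.
Qed.

Lemma delta_iff_on_phi q x (P Q : X -> Prop) : delta q ->
  (forall t, phi x t -> (P t <-> Q t)) -> (q P <-> q Q).
Proof.
  intros Hq H. pose proof (delta_ultrafilter q Hq) as Hu.
  split; intros HP; apply (ultrafilter_mono Hu _ _ (ultrafilter_and Hu _ _ HP (delta_phi q x Hq)));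
    intros t [H1 H2]; apply (H t H2); exact H1.
Qed.

Lemma mul_ultrafilter p q : ultrafilter X p -> delta q -> ultrafilter X (mul p q).
Proof.
  intros Hp Hq. pose proof (delta_ultrafilter q Hq) as Hu. unfold uf_mul.
  split; [|split; [|split; [|split]]].
  - intros H. destruct (ultrafilter_inhabited Hp _ H) as [s Hs].
    destruct (ultrafilter_inhabited Hu _ Hs) as [t [u [_ []]]].
  - apply (ultrafilter_mono Hp _ _ (ultrafilter_true Hp)). intros s _.
    apply (ultrafilter_mono Hu _ _ (delta_phi q s Hq)).
    intros t Ht. unfold sinv. destruct (opX s t) as [u|] eqn:E; [exists u; auto|destruct (Ht E)].
  - intros A B HA HAB. apply (ultrafilter_mono Hp _ _ HA). intros s Hs.
    apply (ultrafilter_mono Hu _ _ Hs). intros t [u [H1 H2]]. exists u; auto.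
  - intros A B HA HB. apply (ultrafilter_mono Hp _ _ (ultrafilter_and Hp _ _ HA HB)).
    intros s [Hs1 Hs2]. apply (ultrafilter_mono Hu _ _ (ultrafilter_and Hu _ _ Hs1 Hs2)).
    intros t [[u [E1 Au]] [u' [E2 Bu]]]. rewrite E1 in E2. injection E2 as <-. exists u; auto.
  - intros A. destruct (ultrafilter_dec Hp (fun s => q (sinv X opX s A))) as [H|H];
      [left; auto|right].
    apply (ultrafilter_mono Hp _ _ H). intros s Hs.
    apply (ultrafilter_mono Hu _ _
             (ultrafilter_and Hu _ _ (ultrafilter_compl Hu _ Hs) (delta_phi q s Hq))).
    intros t [H1 H2]. unfold sinv. destruct (opX s t) as [u|] eqn:E; [|congruence].
    exists u. split; auto. intros Au. apply H1. exists u; auto.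
Qed.

Lemma oprod_assoc_some x t u w : opX x t = Some u ->
  opX u w = oprod (Some x) (opX t w).
Proof.
  intros E. change (oprod (Some u) (Some w) = oprod (Some x) (opX t w)).
  rewrite <- E. exact (oprod_assoc (Some x) (Some t) (Some w)).
Qed.

Lemma mul_delta p q : delta p -> delta q -> delta (mul p q).
Proof.
  intros Hp Hq. split; [apply mul_ultrafilter; [apply delta_ultrafilter|]; assumption|].
  intros x. unfold uf_mul.
  apply (ultrafilter_mono (delta_ultrafilter p Hp) _ _ (delta_phi p x Hp)). intros s Hs.
  destruct (opX x s) as [y|] eqn:E; [|destruct (Hs E)].
  apply (ultrafilter_mono (delta_ultrafilter q Hq) _ _ (delta_phi q y Hq)). intros t Ht.
  unfold phiS in Ht. rewrite (oprod_assoc_some x s y t E) in Ht. unfold sinv.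
  destruct (opX s t) as [u|]; [|destruct (Ht eq_refl)]. exists u. split; auto.
Qed.

Lemma uf_mul_mem p q (A B : X -> Prop) : ultrafilter X p -> ultrafilter X q -> p B ->
  (forall x, B x -> exists C, q C /\ forall y, C y -> exists z, opX x y = Some z /\ A z) ->
  mul p q A.
Proof.
  intros Hp Hq HB H. apply (ultrafilter_mono Hp _ _ HB). intros x Hx.
  destruct (H x Hx) as [C [HC HCA]]. apply (ultrafilter_mono Hq _ _ HC). exact HCA.
Qed.

Lemma sinv_sinv x t u (A : X -> Prop) w : opX x t = Some u ->
  (sinv X opX u A w <-> sinv X opX t (sinv X opX x A) w).
Proof.
  intros E. unfold sinv. rewrite (oprod_assoc_some x t u w E). split.
  - intros [z [Ez Az]]. destruct (opX t w) as [v|]; [|discriminate]. eauto.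
  - intros [v [-> [z [Ez Az]]]]. eauto.
Qed.

Lemma mul_assoc p q r : delta p -> delta q -> delta r -> mul (mul p q) r = mul p (mul q r).
Proof.
  intros Hp Hq Hr. apply functional_extensionality; intros A.
  apply propositional_extensionality. unfold uf_mul.
  apply (ultrafilter_iff (delta_ultrafilter p Hp)). intros x.
  apply (delta_iff_on_phi q x); auto. intros t Ht.
  destruct (opX x t) as [u|] eqn:E; [|destruct (Ht E)].
  rewrite <- (ultrafilter_iff (delta_ultrafilter r Hr) _ _ (fun w => sinv_sinv x t u A w E)).
  unfold sinv at 1. rewrite E. split.
  - intros [u' [Eu Hu]]. injection Eu as <-. exact Hu.
  - intros Hu. eauto.
Qed.

Lemma closed_delta_containing (P : (X -> Prop) -> Prop) :
  uf_closed X (fun q => delta q /\ forall A, P A -> q A).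
Proof.
  intros p Hp Hcl.
  assert (Hmem : forall A, (forall q, delta q -> (forall B, P B -> q B) -> q A) -> p A).
  { intros A HA. apply (closure_mem X (fun q => delta q /\ forall A, P A -> q A)); auto.
    intros r [Hr HrP]. split; [apply delta_ultrafilter|apply HA]; assumption. }
  split; [split; [exact Hp|]|].
  - intros x. apply Hmem. intros q Hq _. apply delta_phi, Hq.
  - intros A HA. apply Hmem. intros q _ HqP. apply HqP, HA.
Qed.

Lemma closed_delta : uf_closed X delta.
Proof.
  intros p Hp Hcl. apply (closed_delta_containing (fun _ => False) p Hp).
  intros A HA. destruct (Hcl A HA) as [r [Hr HrA]]. exists r. split; [split; [exact Hr|]|]; tauto.
Qed.

Lemma closed_image_mulr (C : ufilter -> Prop) q : uf_closed X C -> (forall x, C x -> delta x) ->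
  delta q -> uf_closed X (fun z => exists x, C x /\ z = mul x q).
Proof.
  intros HC HCd Hq z Hz Hcl.
  assert (HCu : forall x, C x -> ultrafilter X x) by (intros; apply delta_ultrafilter; auto).
  set (D := fun A x => C x /\ mul x q A).
  destruct (directed_closed_family_meet X (fun M => exists A, z A /\ M = D A)) as [x [_ Hall]].
  - exists (D (fun _ => True)), (fun _ => True). split; [exact (ultrafilter_true Hz)|reflexivity].
  - intros M [A [HA ->]]. split; [|split].
    + apply closed_setI_basic; assumption.
    + intros r [Cr _]. auto.
    + destruct (Hcl A HA) as [r [[x [Cx ->]] Hr]]. exists x. split; assumption.
  - intros M1 M2 [A1 [HA1 ->]] [A2 [HA2 ->]]. exists (D (fun t => A1 t /\ A2 t)). split.
    + eexists. split; [exact (ultrafilter_and Hz _ _ HA1 HA2)|reflexivity].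
    + intros r [Cr Hr]. pose proof (mul_ultrafilter r q (HCu r Cr) Hq) as Hrq.
      split; split; try exact Cr; apply (ultrafilter_mono Hrq _ _ Hr); intros t []; assumption.
  - assert (Cx : C x).
    { apply (Hall (D (fun _ => True))). exists (fun _ => True).
      split; [exact (ultrafilter_true Hz)|reflexivity]. }
    exists x. split; [exact Cx|]. apply ultrafilter_ext; [exact Hz|apply mul_ultrafilter; auto|].
    intros A HA. apply (Hall (D A)). exists A. split; auto.
Qed.

Lemma closed_mulr_fiber (C : ufilter -> Prop) q e : uf_closed X C ->
  (forall x, C x -> delta x) -> delta q -> uf_closed X (fun x => C x /\ mul x q = e).
Proof.
  intros HC HCd Hq p Hp Hcl. split.
  - apply HC; auto. intros A HA. destruct (Hcl A HA) as [r [[Cr _] Hr]]. eauto.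
  - destruct (Hcl _ (ultrafilter_true Hp)) as [r0 [[Cr0 <-] _]].
    apply ultrafilter_ext;
      [apply mul_ultrafilter; auto|apply mul_ultrafilter; auto; apply delta_ultrafilter; auto|].
    intros A HA. destruct (Hcl _ HA) as [r [[Cr Er] Hr]]. rewrite <- Er. exact Hr.
Qed.

Definition uf_subsemigroup (M : ufilter -> Prop) : Prop := forall x y, M x -> M y -> M (mul x y).

Lemma ellis_idempotent (M0 : ufilter -> Prop) : uf_closed X M0 -> (forall x, M0 x -> delta x) ->
  (exists x, M0 x) -> uf_subsemigroup M0 -> exists e, M0 e /\ mul e e = e.
Proof.
  intros HC0 Hd0 Hne0 Hs0.
  set (Good := fun M => uf_closed X M /\ (exists x, M x) /\ (forall x, M x -> M0 x) /\
                        uf_subsemigroup M).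
  destruct (minimal_subset_exists _ Good M0) as [M [(HC & [e He] & HM0 & Hs) [_ Hmin]]].
  - repeat split; auto.
  - intros Ch HCh Htot.
    destruct (closed_chain_meet X M0 Ch) as [HCm Hnem]; auto.
    + intros x Hx. apply delta_ultrafilter; auto.
    + intros M HM. destruct (HCh M HM) as (? & ? & ? & _). auto.
    + split; [exact HCm|split; [exact Hnem|split; [intros x []; assumption|]]].
      intros x y [Hx0 Hx] [Hy0 Hy]. split; [apply Hs0; auto|].
      intros M HM. destruct (HCh M HM) as (_ & _ & _ & HsM).
      apply HsM; [apply Hx|apply Hy]; exact HM.
  - assert (Hd : forall x, M x -> delta x) by auto.
    exists e. split; auto.
    assert (Hfac : exists x, M x /\ e = mul x e).
    { apply (Hmin (fun z => exists x, M x /\ z = mul x e)); [|intros z [x [Mx ->]]; auto|exact He].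
      split; [apply closed_image_mulr; auto|split; [exists (mul e e), e; auto|split]].
      - intros z [x [Mx ->]]. auto.
      - intros z1 z2 [x [Mx ->]] [y [My ->]]. exists (mul (mul x e) y). split; [auto|].
        symmetry. apply mul_assoc; auto. }
    destruct Hfac as [x [Mx Ex]].
    apply (Hmin (fun z => M z /\ mul z e = e)); [|intros z []; assumption|exact He].
    split; [apply closed_mulr_fiber; auto|split; [exists x; auto|split; [intros z []; auto|]]].
    intros z1 z2 [M1 E1] [M2 E2]. split; [auto|]. rewrite mul_assoc, E2; auto.
Qed.

Lemma idempotent_below_in_ideal (T I : ufilter -> Prop) e r0 :
  uf_closed X T -> (forall x, T x -> delta x) -> uf_subsemigroup T ->
  (forall t r, T t -> I r -> I (mul t r) /\ I (mul r t)) -> (forall r, I r -> T r) ->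
  I r0 -> T e -> mul e e = e ->
  exists f, I f /\ mul f f = f /\ mul e f = f /\ mul f e = f.
Proof.
  intros HC Hd Hs Hid HIT Ir0 Te Ee.
  assert (Iq : I (mul r0 e)) by apply (Hid e r0 Te Ir0).
  destruct (ellis_idempotent (fun z => exists t, T t /\ z = mul t (mul r0 e)))
    as [u [[t [Tt Eu_def]] Eu]].
  - apply closed_image_mulr; auto.
  - intros z [t [Tt ->]]. apply mul_delta; auto.
  - exists (mul e (mul r0 e)), e. auto.
  - intros z1 z2 [t [Tt ->]] [t' [Tt' ->]]. exists (mul (mul t (mul r0 e)) t'). split.
    + apply Hs; auto.
    + symmetry. apply mul_assoc; auto.
  - assert (Iu : I u) by (rewrite Eu_def; apply (Hid t _ Tt Iq)).
    assert (Hde : delta e) by auto.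
    assert (Hdu : delta u) by auto.
    assert (Eue : mul u e = u) by (rewrite Eu_def, !mul_assoc, Ee; auto).
    exists (mul e u). split; [apply (Hid e u Te Iu)|split; [|split]].
    + rewrite mul_assoc, <- (mul_assoc u e u), Eue, Eu; auto.
    + rewrite <- mul_assoc, Ee; auto.
    + rewrite mul_assoc, Eue; auto.
Qed.

Definition minimal_idempotent (p : ufilter) : Prop :=
  delta p /\ mul p p = p /\
  forall q, delta q -> mul q q = q -> mul p q = q -> mul q p = q -> q = p.

Lemma minimal_idempotent_exists : (exists x, delta x) -> exists p, minimal_idempotent p.
Proof.
  intros Hne.
  set (Good := fun L => uf_closed X L /\ (exists x, L x) /\ (forall x, L x -> delta x) /\
                        forall x y, delta x -> L y -> L (mul x y)).
  destruct (minimal_subset_exists _ Good delta) as [L [(HC & [l Ll] & Hd & Hid) [_ Hmin]]].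
  - split; [exact closed_delta|split; [exact Hne|split; [auto|exact mul_delta]]].
  - intros Ch HCh Htot.
    destruct (closed_chain_meet X delta Ch) as [HCm Hnem]; auto using closed_delta.
    + intros x Hx. apply delta_ultrafilter; auto.
    + intros M HM. destruct (HCh M HM) as (? & ? & ? & _). auto.
    + split; [exact HCm|split; [exact Hnem|split; [intros x []; assumption|]]].
      intros x y Hx [Hy0 Hy]. split; [apply mul_delta; auto|].
      intros M HM. destruct (HCh M HM) as (_ & _ & _ & HidM). apply HidM; [exact Hx|apply Hy, HM].
  - destruct (ellis_idempotent L HC Hd (ex_intro _ l Ll)) as [p [Lp Ep]].
    { intros x y Lx Ly. apply Hid; auto. }
    exists p. split; [auto|split; [exact Ep|]].
    intros q Hq Eq Epq Eqp.
    assert (Lq : L q) by (rewrite <- Eqp; auto).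
    assert (Hfac : exists x, delta x /\ p = mul x q).
    { apply (Hmin (fun z => exists x, delta x /\ z = mul x q));
        [|intros z [x [Hx ->]]; auto|exact Lp].
      split; [apply closed_image_mulr; auto using closed_delta|].
      split; [exists (mul q q), q; auto|split].
      - intros z [x [Hx ->]]. apply mul_delta; auto.
      - intros x z Hx [y [Hy ->]]. exists (mul x y). split; [apply mul_delta; auto|].
        symmetry. apply mul_assoc; auto. }
    destruct Hfac as [x [Hx Ex]].
    rewrite <- Epq, Ex at 1. rewrite mul_assoc, Eq; auto.
Qed.

End DeltaSemigroup.

Section Image.
Variables (X Y : Type) (opX : X -> X -> option X) (opY : Y -> Y -> option Y) (h : X -> Y).
Hypothesis h_mul : forall x y u, opX x y = Some u -> opY (h x) (h y) = Some (h u).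

Definition uf_image (p : (X -> Prop) -> Prop) : (Y -> Prop) -> Prop :=
  fun B => p (fun x => B (h x)).

Lemma image_ultrafilter p : ultrafilter X p -> ultrafilter Y (uf_image p).
Proof.
  intros (H1 & H2 & H3 & H4 & H5). unfold uf_image. repeat split; auto.
  intros A B HA HAB. apply (H3 _ _ HA). auto.
Qed.

Lemma image_mul p q : deltaS X opX p -> deltaS X opX q ->
  uf_image (uf_mul X opX p q) = uf_mul Y opY (uf_image p) (uf_image q).
Proof.
  intros Hp Hq. apply functional_extensionality; intros A.
  apply propositional_extensionality. unfold uf_image, uf_mul.
  apply (ultrafilter_iff (delta_ultrafilter X opX p Hp)). intros x.
  apply (delta_iff_on_phi X opX q x); auto. intros t Ht.
  destruct (opX x t) as [u|] eqn:E; [|destruct (Ht E)].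
  unfold sinv. rewrite E, (h_mul _ _ _ E). split; intros [u' [Eu Au]]; injection Eu as <-; eauto.
Qed.

End Image.

Section KleeneAC.
Variable X : Type.
Variable op : X -> X -> option X.
Hypothesis assoc : ps_assoc X op.
Hypothesis comm : ps_comm X op.

Local Notation oprod := (oprod X op).

Lemma oprod_comm a b : oprod a b = oprod b a.
Proof. destruct a, b; simpl; auto. Qed.

Lemma oprod_defined_l a b : oprod a b <> None -> a <> None.
Proof. destruct a; simpl; congruence. Qed.

Inductive oexpr := OVar (n : nat) | OMul (a b : oexpr).

Fixpoint oeval (env : list (option X)) (e : oexpr) : option X :=
  match e with OVar n => nth n env None | OMul a b => oprod (oeval env a) (oeval env b) end.

Fixpoint oleaves (e : oexpr) : list nat :=
  match e with OVar n => [n] | OMul a b => oleaves a ++ oleaves b end.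

Fixpoint oprod_list (env : list (option X)) (l : list nat) : option X :=
  match l with
  | [] => None
  | [n] => nth n env None
  | n :: l' => oprod (nth n env None) (oprod_list env l')
  end.

Lemma oprod_list_app env l1 l2 : l1 <> [] -> l2 <> [] ->
  oprod_list env (l1 ++ l2) = oprod (oprod_list env l1) (oprod_list env l2).
Proof.
  intros H1 H2. induction l1 as [|n [|m l1] IH]; [congruence| |].
  - destruct l2; [congruence|reflexivity].
  - change (oprod (nth n env None) (oprod_list env ((m :: l1) ++ l2)) =
            oprod (oprod (nth n env None) (oprod_list env (m :: l1))) (oprod_list env l2)).
    rewrite IH by congruence. rewrite oprod_assoc by exact assoc. reflexivity.
Qed.

Lemma oleaves_nonempty e : oleaves e <> [].
Proof. induction e; simpl; [congruence|]. destruct (oleaves e1); simpl; congruence. Qed.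

Lemma oeval_leaves env e : oeval env e = oprod_list env (oleaves e).
Proof. induction e; simpl; auto. rewrite oprod_list_app by apply oleaves_nonempty. congruence. Qed.

Lemma oprod_list_perm env l1 l2 : Permutation l1 l2 -> oprod_list env l1 = oprod_list env l2.
Proof.
  induction 1 as [|x l l' Hl IH|x y l|]; auto; simpl.
  - destruct l, l'; auto;
      [apply Permutation_nil_cons in Hl|apply Permutation_sym, Permutation_nil_cons in Hl|];
      [contradiction|contradiction|congruence].
  - destruct l; [apply oprod_comm|].
    rewrite <- !(oprod_assoc X op assoc), (oprod_comm (nth y env None)). reflexivity.
  - congruence.
Qed.

Lemma oeval_ac env e1 e2 :
  NatSort.sort (oleaves e1) = NatSort.sort (oleaves e2) -> oeval env e1 = oeval env e2.
Proof.
  intros H. rewrite !oeval_leaves,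
    (oprod_list_perm env _ _ (NatSort.Permuted_sort (oleaves e1))),
    (oprod_list_perm env _ _ (NatSort.Permuted_sort (oleaves e2))). congruence.
Qed.

End KleeneAC.

Ltac oexpr_index t env := lazymatch env with
  | t :: _ => constr:(O)
  | _ :: ?r => let n := oexpr_index t r in constr:(S n) end.

Ltac oexpr_add t env := lazymatch env with
  | [] => constr:([t])
  | t :: _ => env
  | ?h :: ?r => let r' := oexpr_add t r in constr:(h :: r') end.

Ltac oexpr_atoms op t env := lazymatch t with
  | oprod _ _ ?a ?b => let e := oexpr_atoms op a env in oexpr_atoms op b e
  | op ?x ?y => let e := oexpr_add (Some x) env in oexpr_add (Some y) e
  | _ => oexpr_add t env end.

Ltac oexpr_reify op t env := lazymatch t with
  | oprod _ _ ?a ?b =>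
      let ra := oexpr_reify op a env in let rb := oexpr_reify op b env in constr:(OMul ra rb)
  | op ?x ?y =>
      let n := oexpr_index (Some x) env in let m := oexpr_index (Some y) env in
      constr:(OMul (OVar n) (OVar m))
  | _ => let n := oexpr_index t env in constr:(OVar n) end.

(* Closes an equation between products in a commutative partial semigroup by reifying both
   sides and sorting their factors; a raw [op x y] is read as the product of [Some x], [Some y]. *)
Ltac kleene_ac assoc comm :=
  lazymatch type of assoc with ps_assoc ?X ?op =>
  lazymatch goal with |- @eq (option _) ?l ?r =>
    let env := oexpr_atoms op l (@nil (option X)) in
    let env := oexpr_atoms op r env in
    let rl := oexpr_reify op l env in let rr := oexpr_reify op r env in
    change (oeval X op env rl = oeval X op env rr);
    apply (oeval_ac X op assoc comm); vm_compute; reflexivity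
  end end.

Section Tuples.
Variable X : Type.
Variable op : X -> X -> option X.
Hypothesis assoc : ps_assoc X op.
Variable l : nat.

(* [l]-tuples are encoded as [nat -> X]; coordinates [i >= l] are inert and are copied from
   the left factor, which keeps the product associative on the nose. *)
Definition tuple_op (x y : nat -> X) : option (nat -> X) :=
  if excluded_middle_informative (forall i, i < l -> op (x i) (y i) <> None) then
    Some (fun i => if i <? l then match op (x i) (y i) with Some z => z | None => x i end else x i)
  else None.

Lemma tuple_op_spec x y z : tuple_op x y = Some z <->
  (forall i, i < l -> op (x i) (y i) = Some (z i)) /\ (forall i, l <= i -> z i = x i).
Proof.
  unfold tuple_op. destruct (excluded_middle_informative _) as [H|H]; split.
  - intros E. injection E as <-. split; intros i Hi; destruct (Nat.ltb_spec i l); try lia; auto.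
    destruct (op (x i) (y i)) eqn:E; [reflexivity|destruct (H i Hi E)].
  - intros [H1 H2]. f_equal. apply functional_extensionality; intros i.
    destruct (Nat.ltb_spec i l); [rewrite H1|rewrite H2]; auto.
  - discriminate.
  - intros [H1 _]. exfalso. apply H. intros i Hi. rewrite H1; auto. discriminate.
Qed.

Lemma tuple_op_defined x y : tuple_op x y <> None <-> forall i, i < l -> op (x i) (y i) <> None.
Proof. unfold tuple_op. destruct (excluded_middle_informative _); split; congruence || tauto. Qed.

Lemma tuple_op_coord x y z i : tuple_op x y = Some z -> i < l -> op (x i) (y i) = Some (z i).
Proof. intros E Hi. apply tuple_op_spec in E. apply E, Hi. Qed.

Lemma tuple_op_ext a b c d : (forall i, i < l -> op (a i) (b i) = op (c i) (d i)) ->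
  (forall i, l <= i -> a i = c i) -> tuple_op a b = tuple_op c d.
Proof.
  intros H1 H2. destruct (tuple_op c d) as [z|] eqn:E.
  - apply tuple_op_spec in E as [Ez Ebeyond]. apply tuple_op_spec.
    split; intros i Hi; [rewrite H1|rewrite H2]; auto.
  - destruct (tuple_op a b) as [z|] eqn:E'; [|reflexivity]. exfalso.
    apply (proj2 (tuple_op_defined c d)); [|exact E]. intros i Hi.
    rewrite <- H1, (tuple_op_coord _ _ _ _ E' Hi) by exact Hi. discriminate.
Qed.

Lemma tuple_op_assoc : ps_assoc (nat -> X) tuple_op.
Proof.
  intros x y z.
  assert (Hc : forall i, i < l -> oprod X op (op (x i) (y i)) (Some (z i)) =
                                  oprod X op (Some (x i)) (op (y i) (z i)))
    by (intros i _; apply assoc).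
  destruct (tuple_op x y) as [xy|] eqn:Exy; destruct (tuple_op y z) as [yz|] eqn:Eyz.
  - apply tuple_op_ext.
    + intros i Hi. specialize (Hc i Hi).
      rewrite (tuple_op_coord _ _ _ i Exy Hi), (tuple_op_coord _ _ _ i Eyz Hi) in Hc. exact Hc.
    + intros i Hi. apply tuple_op_spec in Exy. apply Exy, Hi.
  - destruct (tuple_op xy z) as [w|] eqn:E; [exfalso|reflexivity].
    apply (proj2 (tuple_op_defined y z)); [|exact Eyz]. intros i Hi N. specialize (Hc i Hi).
    rewrite (tuple_op_coord _ _ _ i Exy Hi), N in Hc. simpl in Hc.
    rewrite (tuple_op_coord _ _ _ i E Hi) in Hc. discriminate.
  - destruct (tuple_op x yz) as [w|] eqn:E; [exfalso|reflexivity].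
    apply (proj2 (tuple_op_defined x y)); [|exact Exy]. intros i Hi N. specialize (Hc i Hi).
    rewrite (tuple_op_coord _ _ _ i Eyz Hi), N in Hc. simpl in Hc.
    rewrite (tuple_op_coord _ _ _ i E Hi) in Hc. discriminate.
  - reflexivity.
Qed.

Variable s0 : X.

Definition tuple_const (c : X) : nat -> X := fun i => if i <? l then c else s0.

Lemma tuple_const_lt c i : i < l -> tuple_const c i = c.
Proof. intros Hi. unfold tuple_const. destruct (Nat.ltb_spec i l); [reflexivity|lia]. Qed.

Lemma tuple_const_mul c d e : op c d = Some e ->
  tuple_op (tuple_const c) (tuple_const d) = Some (tuple_const e).
Proof.
  intros E. apply tuple_op_spec. split; intros i Hi; unfold tuple_const;
    destruct (Nat.ltb_spec i l); auto; lia.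
Qed.

End Tuples.

(** * Translating J_delta-witnesses *)

Section JdeltaIdeal.
Variable X : Type.
Variable op : X -> X -> option X.
Hypothesis assoc : ps_assoc X op.
Hypothesis comm : ps_comm X op.

Local Notation phi := (phiS X op).
Local Notation sigma := (sigmaS X op).
Local Notation oprod := (oprod X op).

Definition mulr_list (W : list X) (a : X) : list X :=
  flat_map (fun w => match op w a with Some y => [y] | None => [] end) W.

Lemma in_mulr_list W a w y : In w W -> op w a = Some y -> In y (mulr_list W a).
Proof.
  intros Hw E. apply in_flat_map. exists w. rewrite E. split; [exact Hw|left; reflexivity].
Qed.

Lemma op_assoc_some x y z xy yz : op x y = Some xy -> op y z = Some yz -> op xy z = op x yz.
Proof. intros E1 E2. pose proof (assoc x y z) as H. rewrite E1, E2 in H. exact H. Qed.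

Lemma Jdelta_set_mul_left p q : deltaS X op p -> Jdelta X op q ->
  forall A, uf_mul X op p q A -> Jdelta_set X op A.
Proof.
  intros Hp [Hq HqJ] A HA F HF Fad W HW.
  pose proof (delta_ultrafilter X op p Hp) as Hpu.
  (* A witness [a] for [s^-1 A] and [s :: W * s] yields the witness [s * a] for [A]. *)
  destruct (ultrafilter_inhabited Hpu _ (ultrafilter_and Hpu _ _ HA (delta_sigma X op p W Hp)))
    as [s [Hs HsW]].
  destruct (HqJ _ Hs F HF Fad (s :: mulr_list W s) ltac:(discriminate)) as [a [Ha [H [HH Hf]]]].
  destruct (op s a) as [sa|] eqn:Esa; [|destruct (Ha s (or_introl eq_refl) Esa)].
  assert (Hws : forall w, In w W -> exists ws, op w s = Some ws /\ In ws (s :: mulr_list W s)).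
  { intros w Hw. destruct (op w s) as [ws|] eqn:Ews; [|destruct (HsW w Hw Ews)].
    exists ws. split; [reflexivity|right; apply (in_mulr_list W s w); assumption]. }
  exists sa. split.
  - intros w Hw. destruct (Hws w Hw) as [ws [Ews Hin]].
    unfold phiS. rewrite <- (op_assoc_some w s a ws sa Ews Esa). apply Ha, Hin.
  - exists H. split; [exact HH|]. intros f Hf'.
    destruct (Hf f Hf') as [v [Ev [Hv [u [Eu [su [Esu Asu]]]]]]].
    exists v. split; [exact Ev|split].
    + intros w y Hw Ewy. destruct (Hws w Hw) as [ws [Ews Hin]].
      apply (Hv ws y Hin). rewrite (op_assoc_some w s a ws sa Ews Esa). exact Ewy.
    + exists su. split; [rewrite (op_assoc_some s a v sa u Esa Eu); exact Esu|exact Asu].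
Qed.

Lemma phi_of_factors W a v u w : sigma W a -> sigma_Wa X op W a v -> op a v = Some u ->
  In w W -> phi w u.
Proof.
  intros Ha Hv Eu Hw. destruct (op w a) as [wa|] eqn:Ewa; [|destruct (Ha w Hw Ewa)].
  unfold phiS. rewrite <- (op_assoc_some w a v wa u Ewa Eu). exact (Hv w wa Hw Ewa).
Qed.

Lemma Jdelta_set_mul_right p q : deltaS X op p -> Jdelta X op q ->
  forall A, uf_mul X op q p A -> Jdelta_set X op A.
Proof.
  intros Hp [Hq HqJ] A HA F HF Fad W HW.
  pose proof (delta_ultrafilter X op p Hp) as Hpu.
  destruct (HqJ _ HA F HF Fad W HW) as [a [Ha [H [HH Hf]]]].
  (* One [t] with every [u_f * t] in [A] and every [w * u_f * t] defined turns the witness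
     [a] for [{s | s^-1 A in p}] into the witness [t * a] for [A]. *)
  set (R := fun f t => exists v u, seqprod X op f H = Some v /\ sigma_Wa X op W a v /\
              op a v = Some u /\ sinv X op u A t /\ sigma (mulr_list W u) t).
  assert (HR : p (fun t => forall f, In f F -> R f t)).
  { apply (ultrafilter_forall_in Hpu). intros f Hf'.
    destruct (Hf f Hf') as [v [Ev [Hv [u [Eu Hu]]]]].
    apply (ultrafilter_mono Hpu _ _
             (ultrafilter_and Hpu _ _ Hu (delta_sigma X op p (mulr_list W u) Hp))).
    intros t [H1 H2]. exists v, u. auto. }
  destruct (ultrafilter_inhabited Hpu _ HR) as [t Ht].
  assert (Hshift : forall v u, op a v = Some u ->
            oprod (Some u) (Some t) = oprod (op t a) (Some v) /\
            forall w, oprod (op w u) (Some t) = oprod (oprod (Some w) (op t a)) (Some v)).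
  { intros v u Eu. split; [|intros w; change (op w u) with (oprod (Some w) (Some u))];
      rewrite <- Eu; kleene_ac assoc comm. }
  destruct F as [|f0 F']; [congruence|].
  destruct (Ht f0 (or_introl eq_refl)) as [v0 [u0 [_ [Hv0 [Eu0 [[z0 [Ez0 _]] HWu0]]]]]].
  destruct (op t a) as [a'|] eqn:Eta.
  2:{ exfalso. pose proof (proj1 (Hshift v0 u0 Eu0)) as E. simpl in E. rewrite Ez0 in E.
      discriminate. }
  assert (HWa' : forall v u w, sigma_Wa X op W a v -> op a v = Some u ->
            sigma (mulr_list W u) t -> In w W -> oprod (op w a') (Some v) <> None).
  { intros v u w Hv Eu HWu Hw.
    destruct (op w u) as [wu|] eqn:Ewu; [|destruct (phi_of_factors W a v u w Ha Hv Eu Hw Ewu)].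
    pose proof (proj2 (Hshift v u Eu) w) as E. rewrite Ewu in E.
    change (oprod (oprod (Some w) (Some a')) (Some v) <> None). rewrite <- E.
    apply (HWu wu), (in_mulr_list W u w); assumption. }
  exists a'. split; [|exists H; split; [exact HH|]].
  - intros w Hw. exact (oprod_defined_l X op _ _ (HWa' v0 u0 w Hv0 Eu0 HWu0 Hw)).
  - intros f Hf'. destruct (Ht f Hf') as [v [u [Ev [Hv [Eu [[z [Ez Az]] HWu]]]]]].
    exists v. split; [exact Ev|split].
    + intros w y Hw Ewy. pose proof (HWa' v u w Hv Eu HWu Hw) as K. rewrite Ewy in K. exact K.
    + exists z. split; [|exact Az]. pose proof (proj1 (Hshift v u Eu)) as E.
      change (oprod (Some a') (Some v) = Some z). rewrite <- E. exact Ez.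
Qed.

End JdeltaIdeal.

Section WFactor.
Variable X : Type.
Variable op : X -> X -> option X.
Hypothesis assoc : ps_assoc X op.
Hypothesis comm : ps_comm X op.
Variable W : list X.

Local Notation phi := (phiS X op).
Local Notation sigma := (sigmaS X op).
Local Notation oprod := (oprod X op).

(* The shape [a * prod_{t in H} f(t)] of the witnesses in the definition of a J_delta-set. *)
Definition wfactor (a v u : X) : Prop := sigma W a /\ sigma_Wa X op W a v /\ op a v = Some u.

Definition wguard (u c : X) : Prop := forall w wu, In w W -> op w u = Some wu -> phi wu c.

Lemma wguard_defined u c : (forall w, In w W -> phi w u) -> wguard u c ->
  forall w, In w W -> oprod (oprod (Some w) (Some u)) (Some c) <> None.
Proof.
  intros Hu Hg w Hw. simpl. destruct (op w u) as [wu|] eqn:E; [|destruct (Hu w Hw E)].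
  exact (Hg w wu Hw E).
Qed.

Lemma wfactor_of_defined a v u : op a v = Some u ->
  (forall w, In w W -> oprod (oprod (Some w) (Some a)) (Some v) <> None) -> wfactor a v u.
Proof.
  intros Eu Hdef. split; [|split; [|exact Eu]].
  - intros w Hw. exact (oprod_defined_l X op _ _ (Hdef w Hw)).
  - intros w y Hw Ewy. pose proof (Hdef w Hw) as K. simpl in K. rewrite Ewy in K. exact K.
Qed.

Lemma wfactor_phi a v u w : wfactor a v u -> In w W -> phi w u.
Proof. intros (Ha & Hv & Eu). exact (phi_of_factors X op assoc W a v u w Ha Hv Eu). Qed.

Lemma wfactor_mul a v u b v' u' z : wfactor a v u -> wfactor b v' u' -> op u u' = Some z ->
  wguard u u' -> exists ab vv, op a b = Some ab /\ op v v' = Some vv /\ wfactor ab vv z.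
Proof.
  intros Hu Hu' Ez Hg.
  pose proof (wguard_defined u u' (fun w => wfactor_phi a v u w Hu) Hg) as Hdef.
  destruct Hu as (_ & _ & Eu), Hu' as (_ & _ & Eu').
  assert (E : forall w, oprod (oprod (Some w) (Some u)) (Some u') =
                        oprod (oprod (Some w) (op a b)) (op v v'))
    by (intros w; rewrite <- Eu, <- Eu'; kleene_ac assoc comm).
  assert (Ez' : oprod (op a b) (op v v') = Some z).
  { rewrite <- Ez. change (op u u') with (oprod (Some u) (Some u')).
    rewrite <- Eu, <- Eu'. kleene_ac assoc comm. }
  destruct (op a b) as [ab|]; [|discriminate].
  destruct (op v v') as [vv|]; [|discriminate].
  exists ab, vv. split; [reflexivity|split; [reflexivity|]].
  apply wfactor_of_defined; [exact Ez'|]. intros w Hw. rewrite <- E. apply Hdef, Hw.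
Qed.

Lemma wfactor_mulr a v u c z : wfactor a v u -> op u c = Some z -> wguard u c ->
  exists ac, op a c = Some ac /\ wfactor ac v z.
Proof.
  intros Hu Ez Hg.
  pose proof (wguard_defined u c (fun w => wfactor_phi a v u w Hu) Hg) as Hdef.
  destruct Hu as (_ & _ & Eu).
  assert (E : forall w, oprod (oprod (Some w) (Some u)) (Some c) =
                        oprod (oprod (Some w) (op a c)) (Some v))
    by (intros w; rewrite <- Eu; kleene_ac assoc comm).
  assert (Ez' : oprod (op a c) (Some v) = Some z).
  { rewrite <- Ez. change (op u c) with (oprod (Some u) (Some c)). rewrite <- Eu.
    kleene_ac assoc comm. }
  destruct (op a c) as [ac|]; [|discriminate].
  exists ac. split; [reflexivity|].
  apply wfactor_of_defined; [exact Ez'|]. intros w Hw. rewrite <- E. apply Hdef, Hw.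
Qed.

Lemma wfactor_mull c b v u z : sigma W c -> wfactor b v u -> op c u = Some z -> wguard c u ->
  exists cb, op c b = Some cb /\ wfactor cb v z.
Proof.
  intros Hc Hu Ez Hg.
  pose proof (wguard_defined c u Hc Hg) as Hdef.
  destruct Hu as (_ & _ & Eu).
  assert (E : forall w, oprod (oprod (Some w) (Some c)) (Some u) =
                        oprod (oprod (Some w) (op c b)) (Some v))
    by (intros w; rewrite <- Eu; kleene_ac assoc comm).
  assert (Ez' : oprod (op c b) (Some v) = Some z).
  { rewrite <- Ez. change (op c u) with (oprod (Some c) (Some u)). rewrite <- Eu.
    kleene_ac assoc comm. }
  destruct (op c b) as [cb|]; [|discriminate].
  exists cb. split; [reflexivity|].
  apply wfactor_of_defined; [exact Ez'|]. intros w Hw. rewrite <- E. apply Hdef, Hw.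
Qed.

Lemma sigma_mul c d z : sigma W c -> op c d = Some z -> wguard c d -> sigma W z.
Proof.
  intros Hc Ez Hg w Hw. pose proof (wguard_defined c d Hc Hg w Hw) as K.
  rewrite oprod_assoc in K by exact assoc. simpl in K. rewrite Ez in K. exact K.
Qed.

End WFactor.

Lemma wfactor_incl X op (W1 W2 : list X) a v u : incl W1 W2 ->
  wfactor X op W2 a v u -> wfactor X op W1 a v u.
Proof.
  intros Hincl (Ha & Hv & Eu). split; [|split; [|exact Eu]].
  - intros w Hw. apply Ha, Hincl, Hw.
  - intros w y Hw. apply Hv, Hincl, Hw.
Qed.

Section SequenceProducts.
Variable X : Type.
Variable op : X -> X -> option X.
Hypothesis assoc : ps_assoc X op.

Lemma lprod_app l1 l2 : l1 <> [] -> l2 <> [] ->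
  lprod X op (l1 ++ l2) = oprod X op (lprod X op l1) (lprod X op l2).
Proof.
  intros H1 H2. induction l1 as [|x [|y l1] IH]; [congruence| |].
  - destruct l2 as [|y l2]; [congruence|]. simpl app. change (lprod X op (x :: y :: l2))
      with (match lprod X op (y :: l2) with Some v => op x v | None => None end).
    destruct (lprod X op (y :: l2)); reflexivity.
  - change ((x :: y :: l1) ++ l2) with (x :: ((y :: l1) ++ l2)).
    change (lprod X op (x :: ((y :: l1) ++ l2)))
      with (oprod X op (Some x) (lprod X op ((y :: l1) ++ l2))).
    change (lprod X op (x :: y :: l1)) with (oprod X op (Some x) (lprod X op (y :: l1))).
    rewrite IH by congruence. apply eq_sym, oprod_assoc, assoc.
Qed.

Lemma seqprod_app f H1 H2 : H1 <> [] -> H2 <> [] ->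
  seqprod X op f (H1 ++ H2) = oprod X op (seqprod X op f H1) (seqprod X op f H2).
Proof.
  intros N1 N2. unfold seqprod. rewrite map_app.
  apply lprod_app; [destruct H1|destruct H2]; simpl; congruence.
Qed.

Lemma adequate_common_threshold (G : list (nat -> X)) (K : list X) :
  (forall f, In f G -> adequate_seq X op f) -> K <> [] ->
  exists N, forall f, In f G -> forall H, finset_nat H -> N <= hd 0 H ->
    forall v, seqprod X op f H = Some v -> sigmaS X op K v.
Proof.
  intros HG HK. induction G as [|g G IH].
  - exists 0. intros f [].
  - destruct IH as [N HN]; [intros f Hf; apply HG; right; exact Hf|].
    destruct (proj2 (HG g (or_introl eq_refl)) K HK) as [Ng HNg].
    exists (Nat.max N Ng). intros f [<-|Hf] H HH Hm; [apply HNg|apply HN]; auto; lia.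
Qed.

End SequenceProducts.

Lemma sorted_lt_app (H1 H2 : list nat) : Sorted lt H1 -> Sorted lt H2 ->
  (forall x y, In x H1 -> In y H2 -> x < y) -> Sorted lt (H1 ++ H2).
Proof.
  intros S1 S2 Hlt. induction H1 as [|x H1 IH]; simpl; [exact S2|].
  inversion S1 as [|? ? S1' HR]; subst. constructor.
  - apply IH; [exact S1'|]. intros a b Ha Hb. apply Hlt; [right|]; assumption.
  - destruct H1 as [|x' H1']; simpl.
    + destruct H2 as [|y H2']; constructor. apply Hlt; simpl; auto.
    + inversion HR; subst. constructor; assumption.
Qed.

Lemma sorted_lt_hd_le (H : list nat) : Sorted lt H -> forall y, In y H -> hd 0 H <= y.
Proof.
  intros SH y Hy. destruct H as [|x H]; [destruct Hy|]. simpl.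
  destruct Hy as [->|Hy]; [lia|].
  apply Sorted_extends in SH; [|exact Nat.lt_trans]. rewrite Forall_forall in SH.
  specialize (SH y Hy). lia.
Qed.

Lemma finset_nat_singleton n : finset_nat [n].
Proof. split; [discriminate|repeat constructor]. Qed.

Lemma finset_nat_app (H1 H2 : list nat) : finset_nat H1 -> finset_nat H2 ->
  list_max H1 < hd 0 H2 -> finset_nat (H1 ++ H2).
Proof.
  intros [N1 S1] [N2 S2] Hlt. split; [destruct H1; [congruence|discriminate]|].
  apply sorted_lt_app; [exact S1|exact S2|]. intros x y Hx Hy.
  pose proof (proj1 (list_max_le H1 _) (le_n _)) as Hmax. rewrite Forall_forall in Hmax.
  pose proof (Hmax x Hx). pose proof (sorted_lt_hd_le H2 S2 y Hy). lia.
Qed.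

(** * Members of minimal idempotents are J_delta-sets *)

Section JdeltaNonempty.
Variable X : Type.
Variable op : X -> X -> option X.
Hypothesis assoc : ps_assoc X op.
Hypothesis comm : ps_comm X op.
Hypothesis adequate : ps_adequate X op.
Variable s0 : X.
Variable F : list (nat -> X).
Variable W : list X.
Hypothesis F_nonempty : F <> [].
Hypothesis W_nonempty : W <> [].
Hypothesis F_adequate : forall f, In f F -> adequate_seq X op f.

Local Notation l := (length F).
Local Notation tuple := (nat -> X).
Local Notation top := (tuple_op X op l).
Local Notation sigma := (sigmaS X op).
Local Notation wguard := (wguard X op W).

Definition seq_at (i : nat) : nat -> X := nth i F (fun _ => s0).

Lemma length_pos : 0 < l.
Proof. destruct F; [congruence|simpl; lia]. Qed.

Definition Iset (m : nat) (x : tuple) : Prop :=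
  exists a H, finset_nat H /\ m <= hd 0 H /\
    forall i, i < l -> exists v, seqprod X op (seq_at i) H = Some v /\ wfactor X op W a v (x i).

Definition Dset (x : tuple) : Prop := exists c, sigma W c /\ forall i, i < l -> x i = c.

Definition Eset (m : nat) (x : tuple) : Prop := Dset x \/ Iset m x.

Lemma Iset_mono m m' x : m <= m' -> Iset m' x -> Iset m x.
Proof. intros Hm (a & H & HH & Hm' & Hx). exists a, H. split; [exact HH|split; [lia|exact Hx]]. Qed.

Lemma Iset_intro m z a b H : finset_nat H -> m <= hd 0 H ->
  (forall i, i < l -> exists v ab, op a b = Some ab /\ seqprod X op (seq_at i) H = Some v /\
                                   wfactor X op W ab v (z i)) -> Iset m z.
Proof.
  intros HH Hm Hz. destruct (Hz 0 length_pos) as (_ & ab & Eab & _).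
  exists ab, H. split; [exact HH|split; [exact Hm|]]. intros i Hi.
  destruct (Hz i Hi) as (v & ab' & Eab' & Ev & Hv). rewrite Eab in Eab'. injection Eab' as <-.
  exists v. auto.
Qed.

(* The fallback [x i] is never read: [guard_spec] only uses coordinates where [w * x_i] is
   defined. *)
Definition guard (x : tuple) : list tuple :=
  x :: map (fun w i => match op w (x i) with Some y => y | None => x i end) W.

Definition tguard (x y : tuple) : Prop := forall i, i < l -> wguard (x i) (y i).

Lemma guard_spec x y : sigmaS tuple top (guard x) y -> top x y <> None /\ tguard x y.
Proof.
  intros Hy. split; [apply Hy; left; reflexivity|]. intros i Hi w wx Hw Ewx.
  assert (K : top (fun i => match op w (x i) with Some y => y | None => x i end) y <> None).
  { apply Hy. right.
    apply (in_map (fun w i => match op w (x i) with Some y => y | None => x i end)), Hw. }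
  pose proof (proj1 (tuple_op_defined X op l _ _) K i Hi) as Ki. simpl in Ki. rewrite Ewx in Ki.
  exact Ki.
Qed.

Lemma Dset_mul_Dset x y z : Dset x -> Dset y -> top x y = Some z -> tguard x y -> Dset z.
Proof.
  intros (c & Hc & Hx) (d & Hd & Hy) Ez Hg. exists (z 0).
  assert (Hzi : forall i, i < l -> op c d = Some (z i)).
  { intros i Hi. rewrite <- (Hx i Hi), <- (Hy i Hi). apply (tuple_op_coord X op l x y z i Ez Hi). }
  split.
  - apply (sigma_mul X op assoc W c d); [exact Hc|apply Hzi, length_pos|].
    rewrite <- (Hx 0 length_pos), <- (Hy 0 length_pos). apply Hg, length_pos.
  - intros i Hi. pose proof (Hzi i Hi). pose proof (Hzi 0 length_pos). congruence.
Qed.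

Lemma Dset_mul_Iset m x y z : Dset x -> Iset m y -> top x y = Some z -> tguard x y -> Iset m z.
Proof.
  intros (c & Hc & Hx) (b & H & HH & Hm & Hy) Ez Hg. apply (Iset_intro m z c b H HH Hm).
  intros i Hi. destruct (Hy i Hi) as (v & Ev & Hv).
  destruct (wfactor_mull X op assoc comm W c b v (y i) (z i)) as (cb & Ecb & Hz).
  - exact Hc.
  - exact Hv.
  - rewrite <- (Hx i Hi). apply (tuple_op_coord X op l x y z i Ez Hi).
  - rewrite <- (Hx i Hi). apply Hg, Hi.
  - exists v, cb. auto.
Qed.

Lemma Iset_mul m x : Iset m x -> exists m', m <= m' /\
  forall y z, Eset m' y -> top x y = Some z -> tguard x y -> Iset m z.
Proof.
  intros (a & H & HH & Hm & Hx). exists (m + S (list_max H)). split; [lia|].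
  intros y z [(d & Hd & Hy)|(b & H' & HH' & Hm' & Hy)] Ez Hg.
  - apply (Iset_intro m z a d H HH Hm). intros i Hi. destruct (Hx i Hi) as (v & Ev & Hv).
    destruct (wfactor_mulr X op assoc comm W a v (x i) d (z i)) as (ad & Ead & Hz).
    + exact Hv.
    + rewrite <- (Hy i Hi). apply (tuple_op_coord X op l x y z i Ez Hi).
    + rewrite <- (Hy i Hi). apply Hg, Hi.
    + exists v, ad. auto.
  - apply (Iset_intro m z a b (H ++ H')).
    + apply finset_nat_app; [exact HH|exact HH'|lia].
    + destruct H as [|n H]; [destruct HH; congruence|exact Hm].
    + intros i Hi. destruct (Hx i Hi) as (v & Ev & Hv), (Hy i Hi) as (v' & Ev' & Hv').
      destruct (wfactor_mul X op assoc comm W a v (x i) b v' (y i) (z i))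
        as (ab & vv & Eab & Evv & Hz).
      * exact Hv.
      * exact Hv'.
      * apply (tuple_op_coord X op l x y z i Ez Hi).
      * apply Hg, Hi.
      * exists vv, ab. split; [exact Eab|split; [|exact Hz]].
        rewrite (seqprod_app X op assoc) by first [exact (proj1 HH)|exact (proj1 HH')].
        rewrite Ev, Ev'. exact Evv.
Qed.

Lemma Eset_mul m x : Eset m x -> exists m', m <= m' /\
  forall y z, Eset m' y -> top x y = Some z -> tguard x y ->
    Eset m z /\ (Iset m x \/ Iset m' y -> Iset m z).
Proof.
  intros Ex. destruct (classic (Iset m x)) as [Ix|Ix].
  - destruct (Iset_mul m x Ix) as (m' & Hm' & Hmul). exists m'. split; [exact Hm'|].
    intros y z Ey Ez Hg. pose proof (Hmul y z Ey Ez Hg). split; [right|]; auto.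
  - destruct Ex as [Dx|]; [|contradiction]. exists m. split; [lia|].
    intros y z [Dy|Iy] Ez Hg.
    + split; [left; apply (Dset_mul_Dset x y z); assumption|].
      intros [|Iy]; [contradiction|apply (Dset_mul_Iset m x y z); assumption].
    + assert (Iz : Iset m z) by (apply (Dset_mul_Iset m x y z); assumption).
      split; [right|]; auto.
Qed.

Local Notation tfilter := ((tuple -> Prop) -> Prop).
Local Notation tdelta := (deltaS tuple top).
Local Notation tmul := (uf_mul tuple top).

Definition Tpoint (q : tfilter) : Prop := tdelta q /\ forall m, q (Eset m).
Definition Ipoint (q : tfilter) : Prop := Tpoint q /\ forall m, q (Iset m).

Lemma Tpoint_closed : uf_closed tuple Tpoint.
Proof.
  intros p Hp Hcl.
  destruct (closed_delta_containing tuple top (fun A => exists m, A = Eset m) p Hp) as [Hd HE].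
  - intros A HA. destruct (Hcl A HA) as [r [[Hr HrE] HrA]].
    exists r. split; [split; [exact Hr|intros B [m ->]; apply HrE]|exact HrA].
  - split; [exact Hd|]. intros m. apply HE. exists m. reflexivity.
Qed.

Lemma tmul_mem q r (A B C : nat -> tuple -> Prop) m : Tpoint q -> tdelta r -> q (B m) ->
  (forall x, B m x -> exists m', r (C m') /\
     forall y z, C m' y -> top x y = Some z -> tguard x y -> A m z) -> tmul q r (A m).
Proof.
  intros [Hq _] Hr HB H. pose proof (delta_ultrafilter tuple top r Hr) as Hru.
  apply (uf_mul_mem tuple top q r (A m) (B m));
    [exact (delta_ultrafilter tuple top q Hq)|exact Hru|exact HB|].
  intros x Hx. destruct (H x Hx) as [m' [HC Hxy]].
  exists (fun y => C m' y /\ sigmaS tuple top (guard x) y).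
  split; [apply (ultrafilter_and Hru); [exact HC|apply (delta_sigma tuple top r _ Hr)]|].
  intros y [Cy Gy]. destruct (guard_spec x y Gy) as [Hdef Hg].
  destruct (top x y) as [z|] eqn:Ez; [|congruence]. exists z. split; [reflexivity|].
  apply (Hxy y z Cy Ez Hg).
Qed.

Lemma Tpoint_subsemigroup : uf_subsemigroup tuple top Tpoint.
Proof.
  intros q r Tq Tr.
  split; [apply mul_delta; [exact (tuple_op_assoc X op assoc l)|apply Tq|apply Tr]|].
  intros m. apply (tmul_mem q r Eset Eset Eset m Tq (proj1 Tr) (proj2 Tq m)).
  intros x Ex. destruct (Eset_mul m x Ex) as (m' & _ & Hmul). exists m'.
  split; [apply (proj2 Tr)|]. intros y z Ey Ez Hg. apply (Hmul y z Ey Ez Hg).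
Qed.

Lemma Ipoint_ideal t r : Tpoint t -> Ipoint r -> Ipoint (tmul t r) /\ Ipoint (tmul r t).
Proof.
  intros Tt [Tr Ir].
  split; (split; [apply Tpoint_subsemigroup; assumption|]); intros m.
  - apply (tmul_mem t r Iset Eset Iset m Tt (proj1 Tr) (proj2 Tt m)).
    intros x Ex. destruct (Eset_mul m x Ex) as (m' & _ & Hmul). exists m'.
    split; [apply Ir|]. intros y z Iy Ez Hg. apply (Hmul y z (or_intror Iy) Ez Hg). right; exact Iy.
  - apply (tmul_mem r t Iset Iset Eset m Tr (proj1 Tt) (Ir m)).
    intros x Ix. destruct (Iset_mul m x Ix) as (m' & _ & Hmul). exists m'.
    split; [apply (proj2 Tt)|exact Hmul].
Qed.

Lemma Iset_meets_sigma m (Z : list tuple) : exists x, Iset m x /\ sigmaS tuple top Z x.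
Proof.
  set (coords := flat_map (fun z => map z (seq 0 l)) Z).
  destruct (adequate (W ++ coords)) as [a Ha]; [destruct W; [congruence|discriminate]|].
  set (K := a :: mulr_list X op (W ++ coords) a).
  destruct (adequate_common_threshold X op F K F_adequate ltac:(discriminate)) as [N HN].
  set (n := Nat.max m N).
  assert (Hv : forall i, i < l -> sigma K (seq_at i n)).
  { intros i Hi. apply (HN (seq_at i) (nth_In F _ Hi) [n] (finset_nat_singleton n)); [simpl; lia|].
    reflexivity. }
  set (x := fun i => match op a (seq_at i n) with Some u => u | None => a end).
  assert (Hfac : forall i, i < l -> wfactor X op (W ++ coords) a (seq_at i n) (x i)).
  { intros i Hi. split; [exact Ha|split].
    - intros w y Hw Ewy. apply (Hv i Hi). right. exact (in_mulr_list X op _ a w y Hw Ewy).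
    - unfold x. destruct (op a (seq_at i n)) eqn:E; [reflexivity|].
      destruct (Hv i Hi a (or_introl eq_refl) E). }
  exists x. split.
  - exists a, [n]. split; [apply finset_nat_singleton|split; [simpl; lia|]].
    intros i Hi. exists (seq_at i n). split; [reflexivity|].
    apply (wfactor_incl X op W (W ++ coords)); [intros w Hw; apply in_or_app; left; exact Hw|].
    apply Hfac, Hi.
  - intros z Hz. apply (tuple_op_defined X op l). intros i Hi.
    apply (wfactor_phi X op assoc (W ++ coords) a (seq_at i n) (x i) (z i) (Hfac i Hi)).
    apply in_or_app; right. apply in_flat_map. exists z. split; [exact Hz|].
    apply in_map, in_seq. lia.
Qed.

Lemma Ipoint_exists : exists r, Ipoint r.
Proof.
  set (G := fun B : tuple -> Prop => exists m Z, forall x, Iset m x -> sigmaS tuple top Z x -> B x).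
  assert (HG : is_filter tuple G).
  { split; [|split; [|split]].
    - intros (m & Z & HZ). destruct (Iset_meets_sigma m Z) as (x & Hx1 & Hx2). exact (HZ x Hx1 Hx2).
    - exists 0, []. auto.
    - intros B1 B2 (m & Z & HZ) H12. exists m, Z. auto.
    - intros B1 B2 (m1 & Z1 & HZ1) (m2 & Z2 & HZ2). exists (Nat.max m1 m2), (Z1 ++ Z2).
      intros x Hx HZ. split; [apply HZ1|apply HZ2];
        try (apply (Iset_mono _ (Nat.max m1 m2)); [lia|exact Hx]);
        intros s Hs; apply HZ, in_or_app; auto. }
  destruct (filter_extends_to_ultrafilter tuple G HG) as [r [Hr HGr]].
  exists r. split; [split; [split; [exact Hr|]|]|].
  - intros y. apply HGr. exists 0, [y]. intros x _ Hx. apply Hx. left. reflexivity.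
  - intros m. apply HGr. exists m, []. intros x Hx _. right. exact Hx.
  - intros m. apply HGr. exists m, []. intros x Hx _. exact Hx.
Qed.

Local Notation const := (tuple_const X l s0).
Local Notation coord i := (fun x : tuple => x i).

Lemma const_image_Tpoint p : deltaS X op p -> Tpoint (uf_image X tuple const p).
Proof.
  intros Hp. pose proof (delta_ultrafilter X op p Hp) as Hpu.
  split; [split; [apply image_ultrafilter, Hpu|]|].
  - intros y. unfold uf_image.
    apply (ultrafilter_mono Hpu _ _ (delta_sigma X op p (map y (seq 0 l)) Hp)). intros c Hc.
    apply (tuple_op_defined X op l). intros i Hi. rewrite tuple_const_lt by exact Hi.
    apply Hc, in_map, in_seq. lia.
  - intros m. apply (ultrafilter_mono Hpu _ _ (delta_sigma X op p W Hp)). intros c Hc.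
    left. exists c. split; [exact Hc|]. intros i Hi. apply tuple_const_lt, Hi.
Qed.

Lemma coord_image_delta f i : i < l -> tdelta f -> deltaS X op (uf_image tuple X (coord i) f).
Proof.
  intros Hi Hf. pose proof (delta_ultrafilter tuple top f Hf) as Hfu.
  split; [apply image_ultrafilter, Hfu|]. intros s. unfold uf_image.
  apply (ultrafilter_mono Hfu _ _ (delta_phi tuple top f (const s) Hf)). intros x Hx.
  pose proof (proj1 (tuple_op_defined X op l _ _) Hx i Hi) as K.
  rewrite tuple_const_lt in K by exact Hi. exact K.
Qed.

Lemma coord_const_image p i : i < l -> uf_image tuple X (coord i) (uf_image X tuple const p) = p.
Proof.
  intros Hi. apply functional_extensionality; intros B. unfold uf_image. f_equal.
  apply functional_extensionality; intros c. rewrite tuple_const_lt by exact Hi. reflexivity.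
Qed.

Lemma coord_image_minimal p f i : i < l -> minimal_idempotent X op p -> tdelta f ->
  tmul f f = f -> tmul (uf_image X tuple const p) f = f -> tmul f (uf_image X tuple const p) = f ->
  uf_image tuple X (coord i) f = p.
Proof.
  intros Hi (Hp & _ & Hmin) Hf Eff Eef Efe.
  pose proof (const_image_Tpoint p Hp) as [He _].
  assert (Hhom : forall x y u, top x y = Some u -> op (x i) (y i) = Some (u i))
    by (intros x y u E; exact (tuple_op_coord X op l x y u i E Hi)).
  pose proof (image_mul tuple X top op (coord i) Hhom) as Himg.
  apply (Hmin _ (coord_image_delta f i Hi Hf)).
  - rewrite <- Himg, Eff; auto.
  - rewrite <- (coord_const_image p i Hi). rewrite <- Himg, Eef; auto.
  - rewrite <- (coord_const_image p i Hi). rewrite <- Himg, Efe; auto.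
Qed.

Lemma minimal_idempotent_member_witness p A : minimal_idempotent X op p -> p A ->
  exists a, sigma W a /\ exists H, finset_nat H /\ forall f, In f F ->
    exists v, seqprod X op f H = Some v /\ sigma_Wa X op W a v /\
      exists u, op a v = Some u /\ A u.
Proof.
  intros Hpmin HA. pose proof Hpmin as [Hp [Epp _]].
  set (e := uf_image X tuple const p).
  assert (Te : Tpoint e) by exact (const_image_Tpoint p Hp).
  assert (Ee : tmul e e = e).
  { unfold e.
    rewrite <- (image_mul X tuple op top const (tuple_const_mul X op l s0) p p Hp Hp), Epp.
    reflexivity. }
  destruct Ipoint_exists as [r0 Ir0].
  destruct (idempotent_below_in_ideal tuple top (tuple_op_assoc X op assoc l) Tpoint Ipoint e r0)
    as (f & [[Hf _] If] & Eff & Eef & Efe);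
    [exact Tpoint_closed|intros q Tq; apply Tq|exact Tpoint_subsemigroup|exact Ipoint_ideal
    |intros q Iq; apply Iq|exact Ir0|exact Te|exact Ee|].
  pose proof (delta_ultrafilter tuple top f Hf) as Hfu.
  assert (HfA : f (fun x => forall i, i < l -> A (x i))).
  { apply (ultrafilter_forall_lt Hfu). intros i Hi.
    change (uf_image tuple X (coord i) f A).
    rewrite (coord_image_minimal p f i Hi Hpmin Hf Eff Eef Efe). exact HA. }
  destruct (ultrafilter_inhabited Hfu _ (ultrafilter_and Hfu _ _ (If 0) HfA))
    as (x & (a & H & HH & _ & Hx) & HAx).
  destruct (Hx 0 length_pos) as (_ & _ & Ha & _). exists a. split; [exact Ha|].
  exists H. split; [exact HH|]. intros g Hg.
  destruct (In_nth F g (fun _ => s0) Hg) as (i & Hi & <-).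
  destruct (Hx i Hi) as (v & Ev & _ & Hv & Eu). exists v. split; [exact Ev|split; [exact Hv|]].
  exists (x i). split; [exact Eu|apply HAx, Hi].
Qed.

End JdeltaNonempty.

Lemma deltaS_inhabited X op : inhabited X -> ps_adequate X op -> exists p, deltaS X op p.
Proof.
  intros [x0] Hadeq.
  set (G := fun A : X -> Prop => exists Z, Z <> [] /\ forall x, sigmaS X op Z x -> A x).
  assert (HG : is_filter X G).
  { split; [|split; [|split]].
    - intros (Z & HZ & H). destruct (Hadeq Z HZ) as [t Ht]. exact (H t Ht).
    - exists [x0]. split; [discriminate|auto].
    - intros A B (Z & HZ & H) HAB. exists Z. auto.
    - intros A B (Z1 & HZ1 & H1) (Z2 & HZ2 & H2). exists (Z1 ++ Z2).
      split; [destruct Z1; [congruence|discriminate]|].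
      intros x Hx. split; [apply H1|apply H2]; intros s Hs; apply Hx, in_or_app; auto. }
  destruct (filter_extends_to_ultrafilter X G HG) as [p [Hp HGp]].
  exists p. split; [exact Hp|]. intros x. apply HGp. exists [x]. split; [discriminate|].
  intros t Ht. apply Ht. left. reflexivity.
Qed.

Lemma Jdelta_closed X op : uf_closed X (Jdelta X op).
Proof.
  intros p Hp Hcl. split.
  - apply (closed_delta X op p Hp). intros A HA.
    destruct (Hcl A HA) as [r [[Hr _] HrA]]. eauto.
  - intros A HA. destruct (Hcl A HA) as [r [[_ HrJ] HrA]]. exact (HrJ A HrA).
Qed.

Lemma Jdelta_mul X op p q : ps_assoc X op -> ps_comm X op -> deltaS X op p -> Jdelta X op q ->
  Jdelta X op (uf_mul X op p q) /\ Jdelta X op (uf_mul X op q p).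
Proof.
  intros Hassoc Hcomm Hp Hq. pose proof (proj1 Hq) as Hqd.
  split; split; try (apply mul_delta; assumption).
  - exact (Jdelta_set_mul_left X op Hassoc p q Hp Hq).
  - exact (Jdelta_set_mul_right X op Hassoc Hcomm p q Hp Hq).
Qed.

Lemma minimal_idempotent_in_Jdelta X op p : ps_assoc X op -> ps_comm X op -> ps_adequate X op ->
  minimal_idempotent X op p -> Jdelta X op p.
Proof.
  intros Hassoc Hcomm Hadeq Hpmin. split; [apply Hpmin|].
  destruct (ultrafilter_inhabited (delta_ultrafilter X op p (proj1 Hpmin)) _
              (ultrafilter_true (delta_ultrafilter X op p (proj1 Hpmin)))) as [s0 _].
  intros A HA F HF Fad W HW.
  exact (minimal_idempotent_member_witness X op Hassoc Hcomm Hadeq s0 F W HF HW Fad p A Hpmin HA).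
Qed.

Theorem theorem3p4 (S : Type) (op : S -> S -> option S)
  (Hinh : inhabited S)
  (Hassoc : ps_assoc S op) (Hcomm : ps_comm S op) (Hadeq : ps_adequate S op) :
  uf_closed S (Jdelta S op) /\ two_sided_ideal_delta S op (Jdelta S op).
Proof.
  split; [apply Jdelta_closed|split; [|split]].
  - intros p [Hp _]. exact Hp.
  - destruct (minimal_idempotent_exists S op Hassoc (deltaS_inhabited S op Hinh Hadeq))
      as [p Hpmin].
    exists p. apply minimal_idempotent_in_Jdelta; assumption.
  - intros p q Hp Hq. apply Jdelta_mul; assumption.
Qed.
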